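(* Let $n\ge 2$, let $\rho>0$ and let $d_1,\dots,d_n>0$. Let $W=(w_{ij})$ be the $n\times n$ matrix with $w_{ij}=1/d_{\min(i,j)}$, let $\mathbf 1\in\mathbb R^n$ be the column vector of ones, and set $M=W-\frac{1}{\rho}\mathbf 1\mathbf 1^T$. If there exist indices $j<k$ with $d_k>d_j$, then $M$ is not positive semidefinite.
   Context: Interpretation: $d_i$ is the density of the cargo placed in the $i$-th position from the bottom of a vessel and $\rho$ is the water density; the hypothesis says some cargo is placed above a cargo of lower density. *)

From HB Require Import structures.
From mathcomp Require Import all_boot all_order all_algebra.
Set Implicit Arguments. Unset Strict Implicit. Unset Printing Implicit Defensive.
Import Order.TTheory GRing.Theory Num.Theory.
Local Open Scope ring_scope.

Definition psd (R : realFieldType) (n : nat) (A : 'M[R]_n) : Prop :=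
  A^T = A /\ forall x : 'cV[R]_n, 0 <= (x^T *m A *m x) ord0 ord0.

Definition Wmat (R : realFieldType) (n : nat) (d : 'I_n -> R) : 'M[R]_n :=
  \matrix_(i, j) (d (if (i <= j)%N then i else j))^-1.

Definition Mmat (R : realFieldType) (n : nat) (rho : R) (d : 'I_n -> R) : 'M[R]_n :=
  Wmat d - rho^-1 *: (const_mx 1 *m (const_mx 1 : 'rV[R]_n)).

From HB Require Import structures.
From mathcomp Require Import all_boot all_order all_algebra.
From mathcomp Require Import lra.
Set Implicit Arguments. Unset Strict Implicit. Unset Printing Implicit Defensive.
Import Order.TTheory GRing.Theory Num.Theory.
Local Open Scope ring_scope.

(* Test the quadratic form on x = e_j - e_k.  Since 1^T x = 0 the rank-one
   part of M drops out, and W contributes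
   1/d_j - 2/d_j + 1/d_k = 1/d_k - 1/d_j, which is negative when d_j < d_k. *)

Lemma mulmx_delta_quad (R : pzRingType) (n : nat) (A : 'M[R]_n) (i l : 'I_n) :
  (delta_mx i (0 : 'I_1) : 'cV[R]_n)^T *m A *m delta_mx l (0 : 'I_1) = const_mx (A i l).
Proof.
apply/matrixP=> a b; rewrite !ord1.
by rewrite trmx_delta -rowE -colE !mxE.
Qed.

Lemma psd_entries_le (R : realFieldType) (n : nat) (A : 'M[R]_n) (j k : 'I_n) :
  psd A -> A j k + A k j <= A j j + A k k.
Proof.
move=> [_ qA_ge0].
have := qA_ge0 (delta_mx j (0 : 'I_1) - delta_mx k 0).
rewrite (linearB (@trmx R n 1)) /= !(mulmxBl, mulmxBr) !mulmx_delta_quad !mxE.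
move=> q_ge0; lra.
Qed.

Lemma Mmat_entry (R : realFieldType) (n : nat) (rho : R) (d : 'I_n -> R) (i l : 'I_n) :
  Mmat rho d i l = (d (if (i <= l)%N then i else l))^-1 - rho^-1.
Proof. by rewrite !mxE big_ord1 !mxE !mulr1. Qed.

Theorem mainTheorem2 (R : realFieldType) (n : nat) (rho : R) (d : 'I_n -> R) :
  (2 <= n)%N -> 0 < rho -> (forall i, 0 < d i) ->
  (exists j k : 'I_n, (j < k)%N /\ d j < d k) ->
  ~ psd (Mmat rho d).
Proof.
move=> _ _ d_gt0 [j [k [lt_jk lt_djk]]] /(psd_entries_le j k).
rewrite !Mmat_entry !leqnn (ltnW lt_jk) leqNgt lt_jk /=.
have : (d k)^-1 < (d j)^-1 by rewrite ltf_pV2 ?posrE.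
lra.
Qed.
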